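(* Let $h,b>0$, $\rho=b/(h+b)$ and $0<\alpha\le\min\{1/2,2\rho,2(1-\rho)\}$. Let $\Theta=[-\alpha/20,\alpha/20]$ and for $\theta\in\Theta$ set $l_1(\theta)=\frac{4\rho-\alpha}{16-8\alpha}+\theta$, $l_2(\theta)=l_1(\theta)+\rho/2$, $r_2(\theta)=l_2(\theta)+1/4$, $r_1(\theta)=r_2(\theta)+(1-\rho)/2$, $w_1=2\pi/\rho$, $w_2=2\pi/(1-\rho)$. Define the density $f(x|\theta)=0$ for $x\notin[0,1]$ and, for $x\in[0,1]$: $f(x|\theta)=2-\alpha$ on $[0,l_1(\theta)]\cup[r_1(\theta),1]$; $f(x|\theta)=\alpha$ on $(l_2(\theta),r_2(\theta)]$; $f(x|\theta)=\alpha+(1-\alpha)(\cos(w_1(x-l_1(\theta)))+1)$ on $[l_1(\theta),l_2(\theta)]$; $f(x|\theta)=\alpha+(1-\alpha)(\cos(w_2(r_1(\theta)-x))+1)$ on $[r_2(\theta),r_1(\theta)]$. Let $x_\theta^*$ be the minimizer of $C_\theta(x)=\mathbb{E}_{X\sim f(\cdot|\theta)}[h(x-X)^++b(X-x)^+]$. Then for every $\theta\in\Theta$, $x_\theta^*\in[l_2(\theta),r_2(\theta)]$ and $$x_\theta^*=\frac{\rho}{2}+\frac{4\rho-\alpha}{16-8\alpha}+\frac18-\left(\frac2\alpha-2\right)\theta.$$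
   Context: For linear overage cost $h$ and underage cost $b$, the minimizer of the expected cost is the $\rho$-quantile of the demand distribution. *)

From Stdlib Require Import Reals.
From Coquelicot Require Import Coquelicot.
Open Scope R_scope.

Definition rho (h b : R) : R := b / (h + b).

Definition l1 (h b alpha theta : R) : R :=
  (4 * rho h b - alpha) / (16 - 8 * alpha) + theta.
Definition l2 (h b alpha theta : R) : R := l1 h b alpha theta + rho h b / 2.
Definition r2 (h b alpha theta : R) : R := l2 h b alpha theta + 1 / 4.
Definition r1 (h b alpha theta : R) : R := r2 h b alpha theta + (1 - rho h b) / 2.
Definition w1 (h b : R) : R := 2 * PI / rho h b.
Definition w2 (h b : R) : R := 2 * PI / (1 - rho h b).

(* The density f(x | theta). On the (measure-zero) boundary points the
   pieces agree, so the order of the tests is immaterial. *)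
Definition dens (h b alpha theta x : R) : R :=
  if Rlt_dec x 0 then 0
  else if Rlt_dec 1 x then 0
  else if Rle_dec x (l1 h b alpha theta) then 2 - alpha
  else if Rle_dec x (l2 h b alpha theta) then
    alpha + (1 - alpha) * (cos (w1 h b * (x - l1 h b alpha theta)) + 1)
  else if Rle_dec x (r2 h b alpha theta) then alpha
  else if Rle_dec x (r1 h b alpha theta) then
    alpha + (1 - alpha) * (cos (w2 h b * (r1 h b alpha theta - x)) + 1)
  else 2 - alpha.

(* C_theta(x) = E_{X ~ f(.|theta)} [ h (x - X)^+ + b (X - x)^+ ].
   Since f vanishes outside [0,1], the expectation is the integral over [0,1]. *)
Definition cost (h b alpha theta x : R) : R :=
  RInt (fun t => dens h b alpha theta t *
                 (h * Rmax (x - t) 0 + b * Rmax (t - x) 0)) 0 1.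

From Pilot Require Import Defs.
From Stdlib Require Import Reals Lra.
From Coquelicot Require Import Coquelicot.
Open Scope R_scope.

(* For every y, the newsvendor loss satisfies
     h (y - t)^+ + b (t - y)^+ >= h (X - t)^+ + b (t - X)^+ + h (y - X)   when t <= X,
     h (y - t)^+ + b (t - y)^+ >= h (X - t)^+ + b (t - X)^+ - b (y - X)   when t >= X,
   strictly for t strictly between X and y.  Integrating against a positive continuous density
   with distribution function F gives C(y) - C(X) > (y - X) (h F(X) - b (1 - F(X))) for y <> X,
   and the right-hand side vanishes as soon as F(X) = rho.  For the density of the statement,
   the cosine piece on [l1, l2] is half a period of length rho / 2 and carries mass rho / 2, so
   on [l2, r2] we have F(x) = (2 - alpha) l1 + rho / 2 + alpha (x - l2), and F(x) = rho is solved
   by the stated x. *)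

Lemma Rmax_Rabs (u v : R) : Rmax u v = (u + v + Rabs (u - v)) / 2.
Proof. unfold Rmax, Rabs; destruct Rle_dec, Rcase_abs; lra. Qed.

Lemma Rmin_Rabs (u v : R) : Rmin u v = (u + v - Rabs (u - v)) / 2.
Proof. unfold Rmin, Rabs; destruct Rle_dec, Rcase_abs; lra. Qed.

Lemma continuous_Rmin_l (a x : R) : continuous (fun t => Rmin t a) x.
Proof.
  apply continuous_ext with (fun t => (t + a - Rabs (t - a)) / 2).
  { intros t; symmetry; apply Rmin_Rabs. }
  apply continuity_pt_filterlim; reg.
Qed.

Lemma continuous_Rmax_l (a x : R) : continuous (fun t => Rmax t a) x.
Proof.
  apply continuous_ext with (fun t => (t + a + Rabs (t - a)) / 2).
  { intros t; symmetry; apply Rmax_Rabs. }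
  apply continuity_pt_filterlim; reg.
Qed.

Definition glue (a : R) (f g : R -> R) (x : R) : R := if Rle_dec x a then f x else g x.

Lemma continuous_glue (a : R) (f g : R -> R) :
  (forall x, continuous f x) -> (forall x, continuous g x) -> f a = g a ->
  forall x, continuous (glue a f g) x.
Proof.
  intros f_cont g_cont fg_a x.
  apply continuous_ext with (fun t => f (Rmin t a) + g (Rmax t a) - g a).
  { intros t; unfold glue, Rmin, Rmax; destruct Rle_dec; rewrite ?fg_a; lra. }
  apply continuity_pt_filterlim.
  apply (continuity_pt_minus (fun t => f (Rmin t a) + g (Rmax t a)) (fun _ => g a)).
  2:{ apply continuity_pt_const; intros ? ?; reflexivity. }
  apply (continuity_pt_plus (fun t => f (Rmin t a)) (fun t => g (Rmax t a)));
    apply continuity_pt_filterlim.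
  - apply (continuous_comp (fun t => Rmin t a) f); auto using continuous_Rmin_l.
  - apply (continuous_comp (fun t => Rmax t a) g); auto using continuous_Rmax_l.
Qed.

Lemma ex_RInt_cont (f : R -> R) (a b : R) : (forall x, continuous f x) -> ex_RInt f a b.
Proof. intros f_cont; apply (ex_RInt_continuous (V := R_CompleteNormedModule)); auto. Qed.

Lemma RInt_Chasles_cont (f : R -> R) (a b c : R) : (forall x, continuous f x) ->
  RInt f a b + RInt f b c = RInt f a c.
Proof.
  intros f_cont.
  exact (RInt_Chasles (V := R_CompleteNormedModule) f a b c
           (ex_RInt_cont f a b f_cont) (ex_RInt_cont f b c f_cont)).
Qed.

Lemma RInt_ext_on (f g : R -> R) (a c : R) : a <= c ->
  (forall x, a < x < c -> f x = g x) -> RInt f a c = RInt g a c.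
Proof. intros ac fg; apply RInt_ext; rewrite Rmin_left, Rmax_right; auto. Qed.

Lemma RInt_const_on (f : R -> R) (v a c : R) : a <= c ->
  (forall x, a < x < c -> f x = v) -> RInt f a c = v * (c - a).
Proof.
  intros ac f_v.
  rewrite (RInt_ext_on f (fun _ => v)), RInt_const by auto; apply Rmult_comm.
Qed.

Lemma RInt_lt_on_subinterval (f g : R -> R) (a d e c : R) : a <= d < e -> e <= c ->
  (forall x, continuous f x) -> (forall x, continuous g x) ->
  (forall x, a < x < c -> f x <= g x) -> (forall x, d < x < e -> f x < g x) ->
  RInt f a c < RInt g a c.
Proof.
  intros [ad de] ec f_cont g_cont fg_le fg_lt.
  rewrite <- (RInt_Chasles_cont f a e c), <- (RInt_Chasles_cont f a d e),
    <- (RInt_Chasles_cont g a e c), <- (RInt_Chasles_cont g a d e); auto.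
  assert (RInt f a d <= RInt g a d)
    by (apply RInt_le; auto using ex_RInt_cont; intros; apply fg_le; lra).
  assert (RInt f d e < RInt g d e) by (apply RInt_lt; auto).
  assert (RInt f e c <= RInt g e c)
    by (apply RInt_le; auto using ex_RInt_cont; intros; apply fg_le; lra).
  lra.
Qed.

Section LinearCombination.
Variables (f g : R -> R) (k : R).
Hypotheses (f_cont : forall x, continuous f x) (g_cont : forall x, continuous g x).

Let comb_cont (x : R) : continuous (fun t => f t + k * g t) x.
Proof. exact (continuous_plus f (fun t => k * g t) x (f_cont x) (continuous_scal_r k g x (g_cont x))). Qed.

Lemma RInt_plus_scal_cont (a b : R) :
  RInt (fun t => f t + k * g t) a b = RInt f a b + k * RInt g a b.
Proof.
  rewrite (RInt_plus (V := R_CompleteNormedModule) f (fun t => scal k (g t))).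
  - rewrite (RInt_scal (V := R_CompleteNormedModule)); auto using ex_RInt_cont.
  - auto using ex_RInt_cont.
  - apply (ex_RInt_scal (V := R_CompleteNormedModule)); auto using ex_RInt_cont.
Qed.

Lemma RInt_plus_scal_le (u : R -> R) (a c : R) : a <= c -> (forall x, continuous u x) ->
  (forall x, a < x < c -> f x + k * g x <= u x) ->
  RInt f a c + k * RInt g a c <= RInt u a c.
Proof.
  intros ac u_cont le_u.
  rewrite <- RInt_plus_scal_cont; apply RInt_le; auto using ex_RInt_cont.
Qed.

Lemma RInt_plus_scal_lt (u : R -> R) (a d e c : R) : a <= d < e -> e <= c ->
  (forall x, continuous u x) ->
  (forall x, a < x < c -> f x + k * g x <= u x) -> (forall x, d < x < e -> f x + k * g x < u x) ->
  RInt f a c + k * RInt g a c < RInt u a c.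
Proof.
  intros ade ec u_cont le_u lt_u.
  rewrite <- RInt_plus_scal_cont; apply (RInt_lt_on_subinterval _ _ a d e c); auto.
Qed.

End LinearCombination.

Definition loss (h b y t : R) : R := h * Rmax (y - t) 0 + b * Rmax (t - y) 0.

Definition expected_loss (h b : R) (g : R -> R) (a c y : R) : R :=
  RInt (fun t => g t * loss h b y t) a c.

Lemma continuous_loss (h b y x : R) : continuous (loss h b y) x.
Proof.
  apply continuous_ext with (fun t =>
    h * ((y - t + 0 + Rabs (y - t - 0)) / 2) + b * ((t - y + 0 + Rabs (t - y - 0)) / 2)).
  { intros t; unfold loss; rewrite !Rmax_Rabs; reflexivity. }
  apply continuity_pt_filterlim; reg.
Qed.

Section Newsvendor.
Variables (h b : R).
Hypotheses (h_pos : 0 < h) (b_pos : 0 < b).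

Lemma loss_ge_below (X y t : R) : t <= X -> loss h b X t + h * (y - X) <= loss h b y t.
Proof. intros; unfold loss, Rmax; repeat destruct Rle_dec; nra. Qed.

Lemma loss_gt_below (X y t : R) : y < t <= X -> loss h b X t + h * (y - X) < loss h b y t.
Proof. intros; unfold loss, Rmax; repeat destruct Rle_dec; nra. Qed.

Lemma loss_ge_above (X y t : R) : X <= t -> loss h b X t - b * (y - X) <= loss h b y t.
Proof. intros; unfold loss, Rmax; repeat destruct Rle_dec; nra. Qed.

Lemma loss_gt_above (X y t : R) : X <= t < y -> loss h b X t - b * (y - X) < loss h b y t.
Proof. intros; unfold loss, Rmax; repeat destruct Rle_dec; nra. Qed.

Variables (g : R -> R) (a c X : R).
Hypotheses (aX : a < X) (Xc : X < c).
Hypothesis g_cont : forall t, continuous g t.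
Hypothesis g_pos : forall t, a < t < c -> 0 < g t.

Let weighted_cont (y t : R) : continuous (fun s : R => g s * loss h b y s) t.
Proof. apply (continuous_mult g); auto using continuous_loss. Qed.

Let g_nonneg (t : R) : a < t < c -> 0 <= g t.
Proof. intros; apply Rlt_le, g_pos; auto. Qed.

Lemma weighted_loss_below_ge (y : R) :
  RInt (fun t => g t * loss h b X t) a X + h * (y - X) * RInt g a X
  <= RInt (fun t => g t * loss h b y t) a X.
Proof.
  apply RInt_plus_scal_le; auto; [lra|].
  intros t Ht. pose proof (loss_ge_below X y t). pose proof (g_nonneg t). nra.
Qed.

Lemma weighted_loss_below_gt (y : R) : y < X ->
  RInt (fun t => g t * loss h b X t) a X + h * (y - X) * RInt g a X
  < RInt (fun t => g t * loss h b y t) a X.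
Proof.
  intros yX.
  assert (Rmax y a < X) by (apply Rmax_lub_lt; lra).
  apply RInt_plus_scal_lt with (d := Rmax y a) (e := X); auto.
  - split; [apply Rmax_r | lra].
  - lra.
  - intros t Ht. pose proof (loss_ge_below X y t). pose proof (g_nonneg t). nra.
  - intros t Ht. pose proof (Rmax_l y a). pose proof (Rmax_r y a).
    pose proof (loss_gt_below X y t). pose proof (g_pos t). nra.
Qed.

Lemma weighted_loss_above_ge (y : R) :
  RInt (fun t => g t * loss h b X t) X c + - b * (y - X) * RInt g X c
  <= RInt (fun t => g t * loss h b y t) X c.
Proof.
  apply RInt_plus_scal_le; auto; [lra|].
  intros t Ht. pose proof (loss_ge_above X y t). pose proof (g_nonneg t). nra.
Qed.

Lemma weighted_loss_above_gt (y : R) : X < y ->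
  RInt (fun t => g t * loss h b X t) X c + - b * (y - X) * RInt g X c
  < RInt (fun t => g t * loss h b y t) X c.
Proof.
  intros Xy.
  assert (X < Rmin y c) by (apply Rmin_glb_lt; lra).
  apply RInt_plus_scal_lt with (d := X) (e := Rmin y c); auto.
  - lra.
  - apply Rmin_r.
  - intros t Ht. pose proof (loss_ge_above X y t). pose proof (g_nonneg t). nra.
  - intros t Ht. pose proof (Rmin_l y c). pose proof (Rmin_r y c).
    pose proof (loss_gt_above X y t). pose proof (g_pos t). nra.
Qed.

Hypothesis critical_fractile : h * RInt g a X = b * RInt g X c.

Theorem expected_loss_strict_min (y : R) : y <> X ->
  expected_loss h b g a c X < expected_loss h b g a c y.
Proof.
  intros yX. unfold expected_loss.
  rewrite <- (RInt_Chasles_cont _ a X c (weighted_cont X)),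
    <- (RInt_Chasles_cont _ a X c (weighted_cont y)).
  assert (balance : h * (y - X) * RInt g a X + - b * (y - X) * RInt g X c = 0).
  { transitivity ((y - X) * (h * RInt g a X - b * RInt g X c)); [ring|].
    rewrite critical_fractile; ring. }
  destruct (Rtotal_order y X) as [lt | [eq | gt]]; [| contradiction |].
  - pose proof (weighted_loss_below_gt y lt). pose proof (weighted_loss_above_ge y). lra.
  - pose proof (weighted_loss_below_ge y). pose proof (weighted_loss_above_gt y gt). lra.
Qed.

End Newsvendor.

Lemma RInt_raised_cos (alpha w p l m : R) : w <> 0 ->
  RInt (fun x => alpha + (1 - alpha) * (cos (w * (x - p)) + 1)) l m
  = m - l + (1 - alpha) * (sin (w * (m - p)) - sin (w * (l - p))) / w.
Proof.
  intros w_nz.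
  apply is_RInt_unique.
  set (F := fun x => x + (1 - alpha) * sin (w * (x - p)) / w).
  replace (m - l + (1 - alpha) * (sin (w * (m - p)) - sin (w * (l - p))) / w)
    with (minus (F m) (F l)) by (unfold F, minus, plus, opp; simpl; field; auto).
  apply (is_RInt_derive (V := R_CompleteNormedModule)); intros x _; unfold F.
  - auto_derive; auto.
    (* [auto_derive] leaves the internal [RinvImpl.Rinv], which [field] does not recognise. *)
    change RinvImpl.Rinv with Rinv; unfold Rminus; field; auto.
  - apply continuity_pt_filterlim; reg.
Qed.

Definition optimal_order (h b alpha theta : R) : R :=
  rho h b / 2 + (4 * rho h b - alpha) / (16 - 8 * alpha) + 1 / 8 - (2 / alpha - 2) * theta.

Definition dens_decr (h b alpha theta x : R) : R :=
  alpha + (1 - alpha) * (cos (w1 h b * (x - l1 h b alpha theta)) + 1).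

Definition dens_incr (h b alpha theta x : R) : R :=
  alpha + (1 - alpha) * (cos (w2 h b * (r1 h b alpha theta - x)) + 1).

(* [dens] continued by the constant [2 - alpha] outside [0, 1], so that it becomes continuous. *)
Definition dens_cont (h b alpha theta : R) : R -> R :=
  glue (l1 h b alpha theta) (fun _ => 2 - alpha)
    (glue (l2 h b alpha theta) (dens_decr h b alpha theta)
      (glue (r2 h b alpha theta) (fun _ => alpha)
        (glue (r1 h b alpha theta) (dens_incr h b alpha theta) (fun _ => 2 - alpha)))).

Lemma dens_cont_eq (h b alpha theta x : R) : 0 <= x <= 1 ->
  dens h b alpha theta x = dens_cont h b alpha theta x.
Proof.
  intros x01; unfold dens, dens_cont, glue.
  destruct (Rlt_dec x 0), (Rlt_dec 1 x); try lra; reflexivity.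
Qed.

Lemma cost_expected_loss (h b alpha theta y : R) :
  cost h b alpha theta y = expected_loss h b (dens_cont h b alpha theta) 0 1 y.
Proof.
  apply RInt_ext_on; [lra|]; intros x x01.
  rewrite dens_cont_eq by lra; reflexivity.
Qed.

Section Instance.
Variables h b alpha theta : R.
Hypotheses (h_pos : 0 < h) (b_pos : 0 < b) (alpha_pos : 0 < alpha) (alpha_half : alpha <= 1 / 2).
Hypotheses (alpha_rho : alpha <= 2 * rho h b) (alpha_rho' : alpha <= 2 * (1 - rho h b)).
Hypothesis theta_range : - alpha / 20 <= theta <= alpha / 20.

Local Notation rho := (rho h b).
Local Notation l1 := (l1 h b alpha theta).
Local Notation l2 := (l2 h b alpha theta).
Local Notation r2 := (r2 h b alpha theta).
Local Notation r1 := (r1 h b alpha theta).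
Local Notation xs := (optimal_order h b alpha theta).
Local Notation f := (dens_cont h b alpha theta).

Lemma rho_bounds : 0 < rho < 1.
Proof.
  assert (rho * (h + b) = b) by (unfold Defs.rho; field; lra).
  split; nra.
Qed.

Lemma rho_balance : h * rho = b * (1 - rho).
Proof. unfold Defs.rho; field; lra. Qed.

Lemma l1_offset_bounds : alpha / 16 <= (4 * rho - alpha) / (16 - 8 * alpha) <= 1 / 4 - alpha / 16.
Proof.
  set (c := (4 * rho - alpha) / (16 - 8 * alpha)).
  assert (c * (16 - 8 * alpha) = 4 * rho - alpha) by (unfold c; field; lra).
  split; nra.
Qed.

Lemma theta_scaled_bounds : - (1 / 10) < (2 / alpha - 1) * theta < 1 / 10.
Proof.
  set (k := 2 / alpha).
  assert (k * alpha = 2) by (unfold k; field; lra).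
  assert (4 <= k) by nra.
  split; nra.
Qed.

Lemma breakpoints_sorted : 0 < l1 < l2 /\ l2 < xs < r2 /\ r2 < r1 < 1.
Proof.
  pose proof rho_bounds; pose proof l1_offset_bounds; pose proof theta_scaled_bounds.
  unfold optimal_order, Defs.r1, Defs.r2, Defs.l2, Defs.l1.
  repeat split; lra.
Qed.

(* This identity is what determines [optimal_order]: the mass of [f] to its left is [rho]. *)
Lemma mass_identity : (2 - alpha) * l1 + rho / 2 + alpha * (xs - l2) = rho.
Proof. unfold optimal_order, Defs.l2, Defs.l1; field; lra. Qed.

Lemma w1_half_period : w1 h b * (l2 - l1) = PI.
Proof. pose proof rho_bounds; unfold w1, Defs.l2; field; lra. Qed.

Lemma w2_half_period : w2 h b * (r1 - r2) = PI.
Proof. pose proof rho_bounds; unfold w2, Defs.r1; field; lra. Qed.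

Lemma continuous_dens_cont (x : R) : continuous f x.
Proof.
  pose proof breakpoints_sorted.
  unfold dens_cont, dens_decr, dens_incr.
  (* The pieces match at the breakpoints because the cosine runs over half a period. *)
  repeat apply continuous_glue; intros; try (apply continuity_pt_filterlim; reg);
    unfold glue; repeat (destruct Rle_dec; try lra);
    rewrite ?Rminus_diag, ?Rmult_0_r, ?cos_0, ?w1_half_period, ?w2_half_period, ?cos_PI; ring.
Qed.

Lemma dens_cont_ge (x : R) : alpha <= f x.
Proof.
  pose proof (COS_bound (w1 h b * (x - l1))); pose proof (COS_bound (w2 h b * (r1 - x))).
  unfold dens_cont, dens_decr, dens_incr, glue.
  repeat destruct Rle_dec; nra.
Qed.

Ltac dens_cont_branch := intros ? ?; unfold dens_cont, glue; repeat (destruct Rle_dec; try lra).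

Lemma RInt_dens_decr : RInt f l1 l2 = rho / 2.
Proof.
  pose proof breakpoints_sorted; pose proof rho_bounds; pose proof PI_RGT_0.
  assert (w1 h b <> 0) by (apply Rgt_not_eq; unfold w1; apply Rdiv_lt_0_compat; lra).
  rewrite (RInt_ext_on f (dens_decr h b alpha theta)); [| lra | dens_cont_branch; reflexivity].
  unfold dens_decr; rewrite RInt_raised_cos by auto.
  rewrite w1_half_period, Rminus_diag, Rmult_0_r, sin_PI, sin_0.
  unfold Defs.l2; lra.
Qed.

Lemma RInt_dens_incr : RInt f r2 r1 = (1 - rho) / 2.
Proof.
  pose proof breakpoints_sorted; pose proof rho_bounds; pose proof PI_RGT_0.
  assert (w2 h b <> 0) by (apply Rgt_not_eq; unfold w2; apply Rdiv_lt_0_compat; lra).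
  rewrite (RInt_ext_on f (fun x => alpha + (1 - alpha) * (cos (- w2 h b * (x - r1)) + 1)));
    [| lra | dens_cont_branch; unfold dens_incr; do 4 f_equal; ring].
  rewrite RInt_raised_cos by (apply Ropp_neq_0_compat; auto).
  replace (- w2 h b * (r2 - r1)) with PI by (rewrite <- w2_half_period; ring).
  rewrite Rminus_diag, Rmult_0_r, sin_PI, sin_0.
  unfold Defs.r1 at 1; lra.
Qed.

Lemma mass_below : RInt f 0 xs = rho.
Proof.
  pose proof breakpoints_sorted; pose proof mass_identity.
  rewrite <- (RInt_Chasles_cont f 0 l2 xs), <- (RInt_Chasles_cont f 0 l1 l2)
    by apply continuous_dens_cont.
  rewrite RInt_dens_decr, (RInt_const_on f (2 - alpha) 0 l1), (RInt_const_on f alpha l2 xs);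
    try lra; dens_cont_branch; reflexivity.
Qed.

Lemma mass_above : RInt f xs 1 = 1 - rho.
Proof.
  pose proof breakpoints_sorted; pose proof mass_identity.
  rewrite <- (RInt_Chasles_cont f xs r1 1), <- (RInt_Chasles_cont f xs r2 r1)
    by apply continuous_dens_cont.
  rewrite RInt_dens_incr, (RInt_const_on f alpha xs r2), (RInt_const_on f (2 - alpha) r1 1);
    try (dens_cont_branch; reflexivity); try lra.
  unfold Defs.r1, Defs.r2, Defs.l2 in *; lra.
Qed.

Lemma optimal_order_strict_min (y : R) : y <> xs ->
  cost h b alpha theta xs < cost h b alpha theta y.
Proof.
  intros y_xs; rewrite !cost_expected_loss.
  pose proof breakpoints_sorted.
  apply expected_loss_strict_min; auto; try lra.
  - apply continuous_dens_cont.
  - intros t _; pose proof (dens_cont_ge t); lra.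
  - rewrite mass_below, mass_above; apply rho_balance.
Qed.

Theorem optimal_order_spec :
  l2 <= xs <= r2 /\
  (forall y, cost h b alpha theta xs <= cost h b alpha theta y) /\
  (forall y, cost h b alpha theta y <= cost h b alpha theta xs -> y = xs).
Proof.
  pose proof breakpoints_sorted.
  split; [lra | split; intros y].
  - destruct (Req_dec y xs) as [-> | y_xs]; [lra |].
    apply Rlt_le, optimal_order_strict_min, y_xs.
  - intros le_xs; destruct (Req_dec y xs) as [| y_xs]; auto.
    pose proof (optimal_order_strict_min y y_xs); lra.
Qed.

End Instance.

Theorem lemma3 (h b alpha theta : R) :
  0 < h -> 0 < b ->
  0 < alpha ->
  alpha <= Rmin (1 / 2) (Rmin (2 * rho h b) (2 * (1 - rho h b))) ->
  - alpha / 20 <= theta <= alpha / 20 ->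
  let xs := rho h b / 2 + (4 * rho h b - alpha) / (16 - 8 * alpha) + 1 / 8
            - (2 / alpha - 2) * theta in
  l2 h b alpha theta <= xs <= r2 h b alpha theta /\
  (forall y, cost h b alpha theta xs <= cost h b alpha theta y) /\
  (forall y, cost h b alpha theta y <= cost h b alpha theta xs -> y = xs).
Proof.
  intros h_pos b_pos alpha_pos alpha_min theta_range xs.
  pose proof (Rmin_l (1 / 2) (Rmin (2 * rho h b) (2 * (1 - rho h b)))).
  pose proof (Rmin_r (1 / 2) (Rmin (2 * rho h b) (2 * (1 - rho h b)))).
  pose proof (Rmin_l (2 * rho h b) (2 * (1 - rho h b))).
  pose proof (Rmin_r (2 * rho h b) (2 * (1 - rho h b))).
  apply optimal_order_spec; lra.
Qed.
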